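(* Let $F_1$ and $F_2$ be sensori-computational devices, and let $R_1\subseteq A\times B$ and $R_2\subseteq C\times E$ be length compatible relations such that $F_1$ is output simulatable modulo $R_1$ and $F_2$ is output simulatable modulo $R_2$. Define the relation $R_{1\times2}$ on sequences of pairs by: $\big((a_1,c_1)\cdots(a_n,c_n)\big)\,R_{1\times2}\,\big((b_1,e_1)\cdots(b_m,e_m)\big)$ if and only if $(a_1\cdots a_n)\,R_1\,(b_1\cdots b_m)$ and $(c_1\cdots c_n)\,R_2\,(e_1\cdots e_m)$. Then the direct product $F_1\times F_2$ is output simulatable modulo $R_{1\times2}$.
   Context: A sensori-computational device is a 6-tuple $F=(V,V_0,Y,\tau,C,c)$ where $V$ is a non-empty finite set of states, $V_0\subseteq V$ a non-empty set of initial states, $Y=Y(F)$ a finite set of observations, $\tau:V\times V\to\mathcal{P}(Y)$, $C$ a set of outputs, $c:V\to\mathcal{P}(C)\setminus\{\emptyset\}$. A string $y_1\cdots y_n$ reaches $w$ from $v$ if there are states $w_0=v,\dots,w_n=w$ with $y_i\in\tau(w_{i-1},w_i)$; $\mathcal{R}_F(s)$ is the set of states reached by $s$ from some initial state; $\mathcal{L}(F)=\{s\in Y^*:\mathcal{R}_F(s)\ne\emptyset\}$; $\mathcal{C}_F(s)=\bigcup_{v\in\mathcal{R}_F(s)}c(v)$. For a relation $R\subseteq A\times B$ between sets of strings, $F'$ output simulates $F$ modulo $R$ if for every $s\in\mathcal{L}(F)$: (1) some $t\in\mathcal{L}(F')$ has $s\,R\,t$; (2) every $t\in B$ with $s\,R\,t$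 satisfies $t\in\mathcal{L}(F')$ and $\mathcal{C}_F(s)\supseteq\mathcal{C}_{F'}(t)$; $F$ is output simulatable modulo $R$ if some device $F'$ output simulates $F$ modulo $R$. The direct product of $F=(V,V_0,Y,\tau,C,c)$ and $F'=(V',V_0',Y',\tau',C',c')$ is $F\times F'=(V\times V',V_0\times V_0',Y\times Y',\tau_{\times},C\times C',c_{\times})$ with $\tau_\times((v,v'),(w,w'))=\tau(v,w)\times\tau'(v',w')$ and $c_\times(v,v')=c(v)\times c'(v')$. Relations $R_1\subseteq A\times B$ and $R_2\subseteq C\times E$, where $A,B,C,E$ are sets of sequences over some alphabets, are length compatible if for every $a\in A$ and $c\in C$ with $|a|=|c|$ there exist $b$ and $e$ with $|b|=|e|$, $a\,R_1\,b$ and $c\,R_2\,e$. *)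

From Stdlib Require List.
From mathcomp Require Import all_boot.
Set Implicit Arguments. Unset Strict Implicit. Unset Printing Implicit Defensive.

(* A sensori-computational device with observations drawn from the type Y
   and outputs from the type C.
   - st : finite (non-empty, because init is non-empty) state set V
   - init : V_0, a non-empty subset of V
   - obs : the finite observation set Y(F) (as a list)
   - tau v w : the subset tau(v,w) of Y(F)
   - out v : the non-empty subset c(v) of C *)
Record device (Y C : Type) := Device {
  st : finType;
  init : st -> Prop;
  init_ne : exists v, init v;
  obs : list Y;
  tau : st -> st -> Y -> Prop;
  tau_obs : forall v w y, tau v w y -> List.In y obs;
  out : st -> C -> Prop;
  out_ne : forall v, exists x, out v x
}.
Arguments st {Y C} d.
Arguments init {Y C} d _.
Arguments obs {Y C} d.
Arguments tau {Y C} d _ _ _.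
Arguments out {Y C} d _ _.
Arguments init_ne {Y C} d.
Arguments tau_obs {Y C} d {v w y} _.
Arguments out_ne {Y C} d v.

Section Semantics.
Variables (Y C : Type) (F : device Y C).

Fixpoint reaches (s : seq Y) (v w : st F) : Prop :=
  match s with
  | [::] => v = w
  | y :: s' => exists u, tau F v u y /\ reaches s' u w
  end.

Definition reached (s : seq Y) (w : st F) : Prop :=
  exists v, init F v /\ reaches s v w.

Definition lang (s : seq Y) : Prop := exists w, reached s w.

Definition outs (s : seq Y) (x : C) : Prop :=
  exists v, reached s v /\ out F v x.
End Semantics.

Definition output_simulates (Y Y' C : Type) (R : seq Y -> seq Y' -> Prop)
    (F : device Y C) (F' : device Y' C) : Prop :=
  forall s, lang F s ->
    (exists t, lang F' t /\ R s t) /\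
    (forall t, R s t -> lang F' t /\ (forall x, outs F' t x -> outs F s x)).

Definition output_simulatable (Y Y' C : Type) (R : seq Y -> seq Y' -> Prop)
    (F : device Y C) : Prop :=
  exists F' : device Y' C, output_simulates R F F'.

Definition rel_in (T U : Type) (A : seq T -> Prop) (B : seq U -> Prop)
    (R : seq T -> seq U -> Prop) : Prop :=
  forall a b, R a b -> A a /\ B b.

Definition length_compatible (T1 U1 T2 U2 : Type)
    (A : seq T1 -> Prop) (C : seq T2 -> Prop)
    (R1 : seq T1 -> seq U1 -> Prop) (R2 : seq T2 -> seq U2 -> Prop) : Prop :=
  forall a c, A a -> C c -> size a = size c ->
    exists b e, size b = size e /\ R1 a b /\ R2 c e.

Definition rel_prod (T1 U1 T2 U2 : Type)
    (R1 : seq T1 -> seq U1 -> Prop) (R2 : seq T2 -> seq U2 -> Prop)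
    (p : seq (T1 * T2)) (q : seq (U1 * U2)) : Prop :=
  R1 (unzip1 p) (unzip1 q) /\ R2 (unzip2 p) (unzip2 q).

Section Product.
Variables (Y1 C1 Y2 C2 : Type) (F1 : device Y1 C1) (F2 : device Y2 C2).

Definition prod_init (vv : (st F1 * st F2)%type) : Prop :=
  init F1 vv.1 /\ init F2 vv.2.
Definition prod_tau (vv ww : (st F1 * st F2)%type) (yy : Y1 * Y2) : Prop :=
  tau F1 vv.1 ww.1 yy.1 /\ tau F2 vv.2 ww.2 yy.2.
Definition prod_out (vv : (st F1 * st F2)%type) (xx : C1 * C2) : Prop :=
  out F1 vv.1 xx.1 /\ out F2 vv.2 xx.2.

Lemma prod_init_ne : exists vv, prod_init vv.
Proof.
have [v Hv] := init_ne F1; have [w Hw] := init_ne F2.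
by exists (v, w); split.
Qed.

Lemma prod_tau_obs vv ww yy :
  prod_tau vv ww yy -> List.In yy (List.list_prod (obs F1) (obs F2)).
Proof.
case: yy => y1 y2 [/= H1 H2]; apply: List.in_prod.
- exact: (tau_obs F1 H1).
- exact: (tau_obs F2 H2).
Qed.

Lemma prod_out_ne vv : exists xx, prod_out vv xx.
Proof.
have [x Hx] := out_ne F1 vv.1; have [y Hy] := out_ne F2 vv.2.
by exists (x, y); split.
Qed.

Definition prod_device : device (Y1 * Y2) (C1 * C2) :=
  @Device _ _ (st F1 * st F2)%type prod_init prod_init_ne
    (List.list_prod (obs F1) (obs F2)) prod_tau prod_tau_obs
    prod_out prod_out_ne.
End Product.

(* A run of the product device is exactly a pair of runs of the factors on the
   two projections of the observation string, so reachable states, languages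
   and outputs of F1 x F2 are the products of those of F1 and F2.  Hence the
   product of two simulators simulates the product, provided every string of
   the product that is related on both projections is related as a whole;
   length compatibility supplies this, since two related strings of equal
   length zip into one. *)
From mathcomp Require Import all_boot.

Section ProductSemantics.
Variables (Y1 C1 Y2 C2 : Type) (F1 : device Y1 C1) (F2 : device Y2 C2).

Lemma reaches_prod (s : seq (Y1 * Y2)) (v w : st (prod_device F1 F2)) :
  reaches s v w <-> reaches (unzip1 s) v.1 w.1 /\ reaches (unzip2 s) v.2 w.2.
Proof.
elim: s v => [|y s IH] v /=.
  split; first by move=> ->.
  by case: v w => ? ? [? ?] /= [-> ->].
split.
  by move=> [u [[H1 H2] /IH [R1 R2]]]; split; [exists u.1 | exists u.2].
move=> [[u1 [H1 R1]] [u2 [H2 R2]]].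
by exists (u1, u2); split; [split | apply/IH].
Qed.

Lemma reached_prod (s : seq (Y1 * Y2)) (w : st (prod_device F1 F2)) :
  reached s w <-> reached (unzip1 s) w.1 /\ reached (unzip2 s) w.2.
Proof.
split.
  by move=> [v [[I1 I2] /reaches_prod [R1 R2]]]; split; [exists v.1 | exists v.2].
move=> [[v1 [I1 R1]] [v2 [I2 R2]]].
by exists (v1, v2); split; [split | apply/reaches_prod].
Qed.

Lemma lang_prod (s : seq (Y1 * Y2)) :
  lang (prod_device F1 F2) s <-> lang F1 (unzip1 s) /\ lang F2 (unzip2 s).
Proof.
split.
  by move=> [w /reached_prod [H1 H2]]; split; [exists w.1 | exists w.2].
by move=> [[w1 H1] [w2 H2]]; exists (w1, w2); apply/reached_prod.
Qed.

Lemma outs_prod (s : seq (Y1 * Y2)) (x : C1 * C2) :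
  outs (prod_device F1 F2) s x <->
  outs F1 (unzip1 s) x.1 /\ outs F2 (unzip2 s) x.2.
Proof.
split.
  by move=> [w [/reached_prod [H1 H2] [O1 O2]]]; split; [exists w.1 | exists w.2].
move=> [[w1 [H1 O1]] [w2 [H2 O2]]].
by exists (w1, w2); split; [apply/reached_prod | split].
Qed.
End ProductSemantics.

Section ProductSimulation.
Variables (Y1 C1 Y2 C2 U1 U2 : Type).
Variables (R1 : seq Y1 -> seq U1 -> Prop) (R2 : seq Y2 -> seq U2 -> Prop).

Lemma rel_prod_zip (s : seq (Y1 * Y2)) (b : seq U1) (e : seq U2) :
  size b = size e -> R1 (unzip1 s) b -> R2 (unzip2 s) e ->
  rel_prod R1 R2 s (zip b e).
Proof. by move=> Hbe Rb Re; rewrite /rel_prod unzip1_zip ?unzip2_zip ?Hbe. Qed.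

Lemma rel_prod_of_length_compatible
    (A : seq Y1 -> Prop) (B : seq U1 -> Prop)
    (C : seq Y2 -> Prop) (E : seq U2 -> Prop) (s : seq (Y1 * Y2))
    (b : seq U1) (e : seq U2) :
  rel_in A B R1 -> rel_in C E R2 -> length_compatible A C R1 R2 ->
  R1 (unzip1 s) b -> R2 (unzip2 s) e -> exists t, rel_prod R1 R2 s t.
Proof.
move=> in1 in2 lc /in1 [As _] /in2 [Cs _].
have size_unzip : size (unzip1 s) = size (unzip2 s) by rewrite !size_map.
have [b' [e' [Hbe [Rb Re]]]] := lc _ _ As Cs size_unzip.
by exists (zip b' e'); apply: rel_prod_zip.
Qed.

Lemma output_simulates_prod (F1 : device Y1 C1) (G1 : device U1 C1)
    (F2 : device Y2 C2) (G2 : device U2 C2) :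
  (forall s b e, R1 (unzip1 s) b -> R2 (unzip2 s) e ->
     exists t, rel_prod R1 R2 s t) ->
  output_simulates R1 F1 G1 -> output_simulates R2 F2 G2 ->
  output_simulates (rel_prod R1 R2) (prod_device F1 F2) (prod_device G1 G2).
Proof.
move=> zippable S1 S2 s /lang_prod [/S1 [[b [_ Rb]] H1] /S2 [[e [_ Re]] H2]].
have sim_rel t : rel_prod R1 R2 s t ->
    lang (prod_device G1 G2) t /\
    (forall x, outs (prod_device G1 G2) t x -> outs (prod_device F1 F2) s x).
  move=> [/H1 [Lt1 O1] /H2 [Lt2 O2]]; split; first exact/lang_prod.
  by move=> x /outs_prod [X1 X2]; apply/outs_prod; split; [apply: O1 | apply: O2].
split=> //.
have [t Rt] := zippable _ _ _ Rb Re.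
by exists t; split=> //; case: (sim_rel t Rt).
Qed.
End ProductSimulation.

Theorem proposition3
    (Y1 C1 Y2 C2 U1 U2 : Type) (F1 : device Y1 C1) (F2 : device Y2 C2)
    (A : seq Y1 -> Prop) (B : seq U1 -> Prop)
    (C : seq Y2 -> Prop) (E : seq U2 -> Prop)
    (R1 : seq Y1 -> seq U1 -> Prop) (R2 : seq Y2 -> seq U2 -> Prop) :
  rel_in A B R1 -> rel_in C E R2 ->
  length_compatible A C R1 R2 ->
  output_simulatable R1 F1 -> output_simulatable R2 F2 ->
  output_simulatable (rel_prod R1 R2) (prod_device F1 F2).
Proof.
move=> in1 in2 lc [G1 S1] [G2 S2].
exists (prod_device G1 G2); apply: output_simulates_prod S1 S2.
move=> s b e; exact: rel_prod_of_length_compatible in1 in2 lc.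
Qed.
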